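(* Let $k\geq1$ and $d_1,\dots,d_k\geq3$ be integers and $T=W_{d_1}\otimes\cdots\otimes W_{d_k}$. Then $Z_k$ is the only zero-dimensional scheme evincing the cactus rank of $T$; that is, $Z_k$ is the unique zero-dimensional scheme $A\subseteq(\mathbb{P}^1)^k$ with $\deg(A)=c_{d_1,\dots,d_k}(T)$ and $[T]\in\langle\nu_{d_1,\dots,d_k}(A)\rangle$.
   Context: Identify $S^d\mathbb{C}^2$ with binary forms in a basis $\{x,y\}$; $W_d=x^{d-1}y$. $\nu_{d_1,\dots,d_k}:(\mathbb{P}^1)^k\to\mathbb{P}(S^{d_1}\mathbb{C}^2\otimes\cdots\otimes S^{d_k}\mathbb{C}^2)$, $([v_1],\dots,[v_k])\mapsto[v_1^{d_1}\otimes\cdots\otimes v_k^{d_k}]$, is the Segre–Veronese embedding; $\langle Y\rangle$ denotes linear span of a subscheme. The cactus rank $c_{d_1,\dots,d_k}(T)$ is the minimal degree of a zero-dimensional scheme $A\subseteq(\mathbb{P}^1)^k$ with $[T]\in\langle\nu_{d_1,\dots,d_k}(A)\rangle$. Let $o_1=[x]\in\mathbb{P}^1$, $Z_1\subseteq\mathbb{P}^1$ the degree-2 scheme supported at $o_1$ with ideal $(\partial_y^2)$, and $Z_k=Z_1\times\cdots\times Z_1$ (degree $2^k$). *)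

From mathcomp Require Import all_boot all_algebra.
From mathcomp Require Import reals.
From mathcomp.real_closed Require Import complex.
From mathcomp Require Import mpoly.
Set Implicit Arguments. Unset Strict Implicit. Unset Printing Implicit Defensive.
Import GRing.Theory.
Local Open Scope ring_scope.

(* The Cox ring of (P^1)^k is S = F[X_1,Y_1,...,X_k,Y_k], multigraded by Z^k,
   realised as {mpoly F[k + k]}: X_i = 'X_(lshift k i), Y_i = 'X_(rshift k i).
   Here X_i = d/dx_i, Y_i = d/dy_i are the coordinates on the i-th P^1 = P(C^2)
   (C^2 with basis {x_i,y_i}).  The same polynomial ring, read in the variables
   x_i,y_i, models the tensor space S^{d_1}C^2 (x) ... (x) S^{d_k}C^2
   (multihomogeneous forms of multidegree d).
   A closed subscheme of (P^1)^k is encoded by its B-saturated multihomogeneous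
   ideal (B = prod_i (X_i,Y_i) the irrelevant ideal); this is a bijection
   (Cox). *)

Section Defs.
Variables (F : fieldType) (k : nat).
Local Notation S := {mpoly F[k + k]}.

Definition xv (i : 'I_k) : 'I_(k + k) := lshift k i.
Definition yv (i : 'I_k) : 'I_(k + k) := rshift k i.

Definition mono_mdeg (D : 'I_k -> nat) (m : 'X_{1..k + k}) : bool :=
  [forall i, m (xv i) + m (yv i) == D i].

Definition mhomog (D : 'I_k -> nat) (f : S) : Prop :=
  forall m, m \in msupp f -> mono_mdeg D m.

Definition mcomp (D : 'I_k -> nat) (f : S) : S :=
  \sum_(m <- msupp f | mono_mdeg D m) f@_m *: 'X_[m].

Definition is_ideal (I : S -> Prop) : Prop :=
  [/\ I 0, (forall f g, I f -> I g -> I (f + g)) & (forall f g, I g -> I (f * g))].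

Definition is_mhomog_ideal (I : S -> Prop) : Prop :=
  is_ideal I /\ forall f D, I f -> I (mcomp D f).

(* saturated w.r.t. B = prod_i (X_i,Y_i); B^N is generated by the monomials
   of multidegree (N,...,N) *)
Definition B_saturated (I : S -> Prop) : Prop :=
  forall f, (exists N, forall m, mono_mdeg (fun _ => N) m -> I ('X_[m] * f)) -> I f.

(* dim_F (S/I)_D = n : there are n forms of multidegree D whose classes form a
   basis of (S/I)_D *)
Definition hilb_eq (I : S -> Prop) (D : 'I_k -> nat) (n : nat) : Prop :=
  exists b : 'I_n -> S,
    [/\ forall j, mhomog D (b j),
        (forall c : 'I_n -> F, I (\sum_j c j *: b j) -> forall j, c j = 0) &
        (forall f, mhomog D f ->
           exists c : 'I_n -> F, I (f - \sum_j c j *: b j))].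

(* the scheme with ideal I has degree n: the Hilbert function is eventually
   equal to n (for all multidegrees D with every D i large) *)
Definition has_degree (I : S -> Prop) (n : nat) : Prop :=
  exists N, forall D : 'I_k -> nat, (forall i, (N <= D i)%N) -> hilb_eq I D n.

(* I is the ideal of a zero-dimensional subscheme of (P^1)^k (a closed
   subscheme whose multigraded Hilbert function is eventually constant) *)
Definition zero_dim_scheme (I : S -> Prop) : Prop :=
  [/\ is_mhomog_ideal I, B_saturated I & exists n, has_degree I n].

Definition apolar (G T : S) : F :=
  \sum_(m <- msupp G) G@_m * T@_m * (\prod_(j < k + k) ((m j)`!)%:R).

(* [T] lies in the linear span <nu_d(A)>, A the scheme with ideal I:
   T <> 0 and T is annihilated by (I)_d, i.e. by all hyperplanes containing
   nu_d(A) *)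
Definition in_span (d : 'I_k -> nat) (I : S -> Prop) (T : S) : Prop :=
  T != 0 /\ forall G, I G -> mhomog d G -> apolar G T = 0.

Definition is_cactus_rank (d : 'I_k -> nat) (T : S) (r : nat) : Prop :=
  (exists I, [/\ zero_dim_scheme I, has_degree I r & in_span d I T]) /\
  (forall I n, zero_dim_scheme I -> has_degree I n -> in_span d I T -> (r <= n)%N).

Definition Wtensor (d : 'I_k -> nat) : S :=
  \prod_(i < k) ('X_(xv i) ^+ (d i).-1 * 'X_(yv i)).

(* ideal of Z_k = Z_1 x ... x Z_1: generated by Y_1^2, ..., Y_k^2 *)
Definition Zk_ideal (f : S) : Prop :=
  exists g : 'I_k -> S, f = \sum_(i < k) g i * 'X_(yv i) ^+ 2.

End Defs.

From mathcomp Require Import all_boot all_algebra.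
From mathcomp Require Import reals.
From mathcomp.real_closed Require Import complex.
From mathcomp Require Import mpoly.
From mathcomp Require Import zify.
From Stdlib Require Import Classical.
Import GRing.Theory Num.Theory.
Local Open Scope ring_scope.
Set Implicit Arguments. Unset Strict Implicit. Unset Printing Implicit Defensive.

(* Write T = X^W, with W the monomial x^(d-1) y in each factor: the apolarity
   pairing of a form G of multidegree d with T is a nonzero multiple of the
   coefficient of X^W in G.  So if [T] lies in the span of the scheme with
   ideal I, no form of I of multidegree E <= d involves a monomial dividing W,
   and the 2^k standard monomials (all Y-exponents at most 1) of multidegree
   (1,...,1) are independent modulo I.  A general linear form X_i + t Y_i keeps
   a family independent modulo a saturated ideal, which carries this family to
   every large multidegree: deg I >= 2^k = deg Z_k.  If deg I = 2^k, the same
   count in multidegree (1,..,2,..,1), where the standard monomials still divide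
   W since d >= 3, puts every monomial containing Y_i^2 into I; by saturation
   Y_i^2 is in I, so Z_k is contained in I.  The standard monomials span S/I in
   large multidegrees and are deg I many, hence independent modulo I, and this
   forces I = Z_k. *)

Section Multidegree.
Variables (F : fieldType) (k : nat).
Local Notation S := {mpoly F[k + k]}.
Local Notation mnm := 'X_{1..k + k}.
Implicit Types (D E : 'I_k -> nat) (f g p : S) (a m : mnm).

Lemma eq_xv (i j : 'I_k) : (xv i == xv j) = (i == j). Proof. exact: eq_lshift. Qed.
Lemma eq_yv (i j : 'I_k) : (yv i == yv j) = (i == j). Proof. exact: eq_rshift. Qed.
Lemma eq_xv_yv (i j : 'I_k) : (xv i == yv j) = false. Proof. exact: eq_lrshift. Qed.
Lemma eq_yv_xv (i j : 'I_k) : (yv i == xv j) = false. Proof. exact: eq_rlshift. Qed.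

Lemma xv_or_yv (v : 'I_(k + k)) : (exists i, v = xv i) \/ (exists i, v = yv i).
Proof. by have := splitK v; case: (split v) => i /= <-; [left|right]; exists i. Qed.

Definition mnm_xy (ex ey : 'I_k -> nat) : mnm :=
  [multinom match split v with inl i => ex i | inr i => ey i end | v < k + k].

Lemma mnm_xy_xv ex ey i : mnm_xy ex ey (xv i) = ex i.
Proof. by rewrite mnmE /xv -[lshift k i]/(unsplit (inl i)) unsplitK. Qed.

Lemma mnm_xy_yv ex ey i : mnm_xy ex ey (yv i) = ey i.
Proof. by rewrite mnmE /yv -[rshift k i]/(unsplit (inr i)) unsplitK. Qed.

Lemma mnmP_xy m1 m2 :
  (forall i, m1 (xv i) = m2 (xv i)) -> (forall i, m1 (yv i) = m2 (yv i)) -> m1 = m2.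
Proof. by move=> hx hy; apply/mnmP => v; case: (xv_or_yv v) => -[i ->]. Qed.

Definition mdeg_at m (i : 'I_k) : nat := (m (xv i) + m (yv i))%N.

Lemma mono_mdegP D m : reflect (forall i, mdeg_at m i = D i) (mono_mdeg D m).
Proof. by apply: (iffP forallP) => h i; apply/eqP; apply: h. Qed.

Lemma mono_mdegD D E a m : mono_mdeg D a -> mono_mdeg E m ->
  mono_mdeg (fun i => D i + E i)%N (a + m)%MM.
Proof.
move=> /mono_mdegP ha /mono_mdegP hm; apply/mono_mdegP => i.
by rewrite /mdeg_at !mnmDE -ha -hm /mdeg_at addnACA.
Qed.

Lemma mono_mdegB D E a m : (m <= a)%MM -> mono_mdeg D a -> mono_mdeg E m ->
  mono_mdeg (fun i => D i - E i)%N (a - m)%MM.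
Proof.
move=> /mnm_lepP le_ma /mono_mdegP a_deg /mono_mdegP m_deg; apply/mono_mdegP => i.
rewrite /mdeg_at !mnmBE -a_deg -m_deg /mdeg_at.
by have := le_ma (xv i); have := le_ma (yv i); lia.
Qed.

Lemma mono_mdeg_subU D m i v : v = xv i \/ v = yv i -> (0 < m v)%N ->
  mono_mdeg D m -> mono_mdeg (fun j => D j - (j == i))%N (m - U_(v))%MM.
Proof.
move=> v_i m_v /mono_mdegP m_deg; apply/mono_mdegP => j.
rewrite /mdeg_at !mnmBE !mnm1E -(m_deg j) /mdeg_at.
case: v_i m_v => -> m_v; rewrite ?eq_xv ?eq_yv ?eq_xv_yv ?eq_yv_xv [j == i]eq_sym;
  by case: (eqVneq i j) => [<-|_] /=; lia.
Qed.

Lemma mhomog_ext D D' f : D =1 D' -> mhomog D f -> mhomog D' f.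
Proof.
by move=> eD hf m /hf /mono_mdegP hm; apply/mono_mdegP => i; rewrite hm eD.
Qed.

Lemma mhomogX D m : mono_mdeg D m -> mhomog D ('X_[m] : S).
Proof. by move=> hm m'; rewrite msuppX mem_seq1 => /eqP ->. Qed.

Lemma mhomogZ D c f : mhomog D f -> mhomog D (c *: f).
Proof. by move=> hf m /msuppZ_le /hf. Qed.

Lemma mhomog0 D : mhomog D (0 : S).
Proof. by move=> m; rewrite msupp0. Qed.

Lemma mhomogD D f g : mhomog D f -> mhomog D g -> mhomog D (f + g).
Proof. by move=> hf hg m /msuppD_le; rewrite mem_cat => /orP[/hf|/hg]. Qed.

Lemma mhomog_sum D (T : Type) (r : seq T) (P : pred T) (G : T -> S) :
  (forall x, P x -> mhomog D (G x)) -> mhomog D (\sum_(x <- r | P x) G x).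
Proof. by move=> hG; elim/big_ind: _ => //; [apply: mhomog0|apply: mhomogD]. Qed.

Lemma mcoeffXM a m p : ('X_[a] * p)@_(a + m) = p@_m.
Proof. by rewrite mulrC mcoeffMX. Qed.

Lemma msuppXM a p m : m \in msupp ('X_[a] * p) ->
  exists2 m', m' \in msupp p & m = (a + m')%MM.
Proof. by rewrite mulrC (perm_mem (msuppMX _ _)) => /mapP [m' h ->]; exists m'. Qed.

Lemma mhomogXM D E a p : mono_mdeg E a -> mhomog D p ->
  mhomog (fun i => E i + D i)%N ('X_[a] * p).
Proof. by move=> ha hp m /msuppXM [m' /hp hm' ->]; apply: mono_mdegD. Qed.

Lemma mpolyX_subU m v : (0 < m v)%N -> 'X_[m] = 'X_[(m - U_(v))%MM] * 'X_v :> S.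
Proof.
move=> mv; rewrite -mpolyXD submK //; apply/mnm_lepP => v'.
by rewrite mnm1E; case: eqP => [<-|].
Qed.

Lemma mcoeff_sumX (s : seq mnm) (P : pred mnm) (c : mnm -> F) m : uniq s ->
  (\sum_(m' <- s | P m') c m' *: 'X_[m'] : S)@_m = if (m \in s) && P m then c m else 0.
Proof.
elim: s => [|m0 s IHs]; first by rewrite big_nil mcoeff0.
rewrite cons_uniq big_cons in_cons => /andP [m0_s /IHs {}IHs].
have [eq_m | ne_m] /= := eqVneq m m0.
  subst m0; rewrite (negbTE m0_s) /= in IHs.
  by case: (P m); rewrite ?mcoeffD ?mcoeffZ ?mcoeffX ?eqxx ?mulr1 IHs ?addr0.
by case: (P m0); rewrite ?mcoeffD ?mcoeffZ ?mcoeffX IHs // eq_sym (negbTE ne_m) mulr0 add0r.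
Qed.

Lemma mcompE D f m : (mcomp D f)@_m = if mono_mdeg D m then f@_m else 0.
Proof.
rewrite /mcomp mcoeff_sumX ?msupp_uniq //.
by case: (boolP (m \in msupp f)) => //= /memN_msupp_eq0 ->; case: ifP.
Qed.

Lemma msupp_mcomp D f m : m \in msupp (mcomp D f) -> mono_mdeg D m && (m \in msupp f).
Proof. by rewrite !mcoeff_msupp mcompE; case: ifP; rewrite ?eqxx. Qed.

Lemma mhomog_mcomp D f : mhomog D (mcomp D f).
Proof. by move=> m /msupp_mcomp /andP []. Qed.

End Multidegree.

Arguments mpolyX_subU {F k m v}.

Section Ideal.
Variables (F : fieldType) (k : nat).
Local Notation S := {mpoly F[k + k]}.

Definition free_mod (I : S -> Prop) n (w : 'I_n -> S) : Prop :=
  forall c : 'I_n -> F, I (\sum_j c j *: w j) -> forall j, c j = 0.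

Definition lincomb_mod (I : S -> Prop) n (w : 'I_n -> S) (f : S) : Prop :=
  exists c : 'I_n -> F, I (f - \sum_j c j *: w j).

Variable I : S -> Prop.
Hypothesis idealI : is_ideal I.
Implicit Types (f g : S).

Lemma ideal0 : I 0. Proof. by case: idealI. Qed.
Lemma idealD f g : I f -> I g -> I (f + g). Proof. by case: idealI => _ h _; apply: h. Qed.
Lemma idealMl f g : I g -> I (f * g). Proof. by case: idealI => _ _ h; apply: h. Qed.
Lemma idealZ c f : I f -> I (c *: f). Proof. by rewrite -mul_mpolyC; apply: idealMl. Qed.
Lemma idealB f g : I f -> I g -> I (f - g).
Proof. by move=> hf hg; rewrite -scaleN1r; apply: idealD => //; apply: idealZ. Qed.

Lemma ideal_sum (T : Type) (r : seq T) (P : pred T) (G : T -> S) :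
  (forall x, P x -> I (G x)) -> I (\sum_(x <- r | P x) G x).
Proof. by move=> hG; elim/big_ind: _ => //; [apply: ideal0|apply: idealD]. Qed.

Lemma ideal_lincomb_subst p n (w : 'I_p -> S) (b : 'I_n -> S) (C : 'M[F]_(p, n)) :
  (forall l, I (w l - \sum_j C l j *: b j)) ->
  forall mu : 'rV[F]_p, I (\sum_l mu 0 l *: w l - \sum_j (mu *m C) 0 j *: b j).
Proof.
move=> hC mu.
have -> : \sum_j (mu *m C) 0 j *: b j = \sum_l mu 0 l *: \sum_j C l j *: b j.
  under eq_bigr do rewrite mxE scaler_suml.
  rewrite exchange_big /=; apply: eq_bigr => l _; rewrite scaler_sumr.
  by apply: eq_bigr => j _; rewrite scalerA.
by rewrite -sumrB; apply: ideal_sum => l _; rewrite -scalerBr; apply: idealZ.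
Qed.

Lemma ideal_lincomb_kernel p n (w : 'I_p -> S) (b : 'I_n -> S) (C : 'M[F]_(p, n)) :
  (forall l, I (w l - \sum_j C l j *: b j)) ->
  forall v : 'rV[F]_p, v *m C = 0 -> I (\sum_l v 0 l *: w l).
Proof.
move=> hC v vC; have := ideal_lincomb_subst hC v.
by rewrite vC [X in _ - X]big1 ?subr0 // => j _; rewrite mxE scale0r.
Qed.

Lemma free_mod_row_free p n (w : 'I_p -> S) (b : 'I_n -> S) (C : 'M[F]_(p, n)) :
  free_mod I w -> (forall l, I (w l - \sum_j C l j *: b j)) -> row_free C.
Proof.
move=> free_w hC; apply: inj_row_free => v /(ideal_lincomb_kernel hC) /free_w v0.
by apply/rowP => l; rewrite mxE v0.
Qed.

Lemma lincomb_mod_matrix p n (w : 'I_p -> S) (b : 'I_n -> S) :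
  (forall l, lincomb_mod I b (w l)) ->
  exists C : 'M[F]_(p, n), forall l, I (w l - \sum_j C l j *: b j).
Proof.
move=> /fin_all_exists [c hc]; exists (\matrix_(l, j) c l j) => l.
by under eq_bigr do rewrite mxE.
Qed.

Lemma free_mod_cons n (b : 'I_n -> S) g : ~ I g ->
  (forall c0 (c : 'I_n -> F), I (c0 *: g + \sum_j c j *: b j) -> forall j, c j = 0) ->
  free_mod I (fun j : 'I_n.+1 => if unlift ord0 j is Some j' then b j' else g).
Proof.
move=> notIg free_b c; rewrite big_ord_recl unlift_none.
under eq_bigr do rewrite liftK.
move=> Ic; have c_lift j : c (lift ord0 j) = 0 by apply: (free_b _ (fun j => c (lift ord0 j)) Ic).
have [c0|nz_c0] := eqVneq (c ord0) 0.
  by move=> j; case: (unliftP ord0 j) => [j' ->|->].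
case: notIg; move: Ic; rewrite big1 => [|j _]; last by rewrite c_lift scale0r.
by rewrite addr0 => /(idealZ (c ord0)^-1); rewrite scalerA mulVf ?scale1r.
Qed.

Lemma free_mod_card_le p n (w : 'I_p -> S) (b : 'I_n -> S) :
  free_mod I w -> (forall l, lincomb_mod I b (w l)) -> (p <= n)%N.
Proof.
move=> free_w /lincomb_mod_matrix [C hC].
by rewrite -(eqP (free_mod_row_free free_w hC)) rank_leq_col.
Qed.

Lemma free_mod_transfer n (w b : 'I_n -> S) :
  free_mod I w -> (forall l, lincomb_mod I b (w l)) -> free_mod I b.
Proof.
move=> free_w /lincomb_mod_matrix [C hC] c Ic.
have unitC : C \in unitmx by rewrite -row_free_unit (free_mod_row_free free_w hC).
pose mu := \row_j c j *m invmx C.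
have muC : mu *m C = \row_j c j by rewrite mulmxKV.
have Imu : I (\sum_l mu 0 l *: w l).
  have := ideal_lincomb_subst hC mu; rewrite muC.
  under [X in _ - X]eq_bigr do rewrite mxE.
  by move=> h; rewrite -(subrK (\sum_j c j *: b j) (\sum_l _)); apply: idealD.
have mu0 : mu = 0 by apply/rowP => l; rewrite [RHS]mxE (free_w _ Imu).
by move=> j; move/rowP/(_ j): muC; rewrite mu0 mul0mx !mxE.
Qed.

End Ideal.

Lemma exists_left_kernel (F : fieldType) p n (A : 'M[F]_(p, n)) : (n < p)%N ->
  exists2 v : 'rV[F]_p, v != 0 & v *m A = 0.
Proof.
move=> lt_np; have : ~~ row_free A.
  by apply: contraTN lt_np => /eqP <-; rewrite -leqNgt rank_leq_col.
by rewrite -kermx_eq0 => /rowV0Pn [v /sub_kermxP vA nz_v]; exists v.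
Qed.

Lemma pchar0_natr_inj (R : fieldType) :
  [pchar R] =i pred0 -> injective (fun n : nat => n%:R : R).
Proof.
move=> /pcharf0P R0 m n; wlog le_mn : m n / (m <= n)%N => [hw|].
  by case/orP: (leq_total m n) => /hw h // /esym /h.
move=> /eqP; rewrite eq_sym -subr_eq0 -natrB // R0 subn_eq0 => le_nm.
by apply/eqP; rewrite eqn_leq le_mn.
Qed.

Section Lifting.
Variables (F : fieldType) (k : nat).
Local Notation S := {mpoly F[k + k]}.
Variable I : S -> Prop.
Hypotheses (idealI : is_ideal I) (satI : B_saturated I).
Hypothesis F_pchar0 : [pchar F] =i pred0.
Implicit Types (D : 'I_k -> nat) (u : S).

Definition lin_form (i : 'I_k) (t : F) : S := 'X_(xv i) + t *: 'X_(yv i).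

(* Saturation with N = 1: a monomial of multidegree (1,...,1) is divisible by
   X_i or by Y_i. *)
Lemma ideal_of_mulXY i u : I ('X_(xv i) * u) -> I ('X_(yv i) * u) -> I u.
Proof.
move=> hx hy; apply: satI; exists 1%N => m /mono_mdegP /(_ i); rewrite /mdeg_at.
have [x0|x_gt0 _] := posnP (m (xv i)).
  rewrite x0 add0n => y1.
  by rewrite (@mpolyX_subU _ _ m (yv i)) ?y1 // -mulrA; apply: (idealMl idealI).
by rewrite (@mpolyX_subU _ _ m (xv i)) // -mulrA; apply: (idealMl idealI).
Qed.

Lemma ideal_of_mul_lin_forms i s t u : s != t ->
  I (lin_form i s * u) -> I (lin_form i t * u) -> I u.
Proof.
move=> neq_st hs ht.
have hY : I ('X_(yv i) * u).
  have -> : 'X_(yv i) * u = (s - t)^-1 *: (lin_form i s * u - lin_form i t * u).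
    rewrite -mulrBl /lin_form opprD addrACA subrr add0r -scalerBl -scalerAl.
    by rewrite scalerA mulVf ?scale1r // subr_eq0.
  by apply: (idealZ idealI); apply: (idealB idealI).
apply: (@ideal_of_mulXY i) => //.
have -> : 'X_(xv i) * u = lin_form i s * u - s *: ('X_(yv i) * u).
  by rewrite /lin_form mulrDl scalerAl addrK.
by apply: (idealB idealI); last apply: (idealZ idealI).
Qed.

Lemma ideal_parts_of_sum i r (t : 'I_r -> F) (u : 'I_r -> S) : injective t ->
  (forall s, I (lin_form i (t s) * u s)) -> I (\sum_s u s) -> forall s, I (u s).
Proof.
elim: r t u => [|r IHr] t u t_inj hu; first by move=> _ [].
rewrite big_ord_recl => hsum; set l0 := lin_form i (t ord0).
have hl0 : I (\sum_(s < r) l0 * u (lift ord0 s)).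
  rewrite -mulr_sumr -[X in I X](addKr (l0 * u ord0)) -mulrDr addrC.
  by apply: (idealB idealI); [apply: (idealMl idealI)|apply: hu].
have hrest s : I (u (lift ord0 s)).
  apply: (@ideal_of_mul_lin_forms i (t (lift ord0 s)) (t ord0)) => //.
    by apply/eqP => /t_inj /eqP; rewrite eq_sym (negbTE (neq_lift _ _)).
  apply: (IHr (fun s => t (lift ord0 s)) (fun s => l0 * u (lift ord0 s))) => //.
    by move=> a b /t_inj /lift_inj.
  by move=> s'; rewrite mulrCA; apply: (idealMl idealI).
have h0 : I (u ord0).
  rewrite -(addrK (\sum_(s < r) u (lift ord0 s)) (u ord0)).
  by apply: (idealB idealI); last apply: (ideal_sum idealI).
by move=> s; case: (unliftP ord0 s) => [s' ->|->].
Qed.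

(* If no t works, take dependency vectors for t = 0, 1, ..., p (this is where
   characteristic zero is used); these p + 1 vectors of F^p are dependent, and
   ideal_parts_of_sum splits the resulting combination term by term. *)
Lemma free_mod_mul_lin_form i p (w : 'I_p -> S) : free_mod I w ->
  exists t, free_mod I (fun j => lin_form i t * w j).
Proof.
move=> free_w; apply: NNPP => no_t.
have bad (s : 'I_p.+1) : exists c : 'I_p -> F,
    I (\sum_j c j *: (lin_form i s%:R * w j)) /\ exists j, c j != 0.
  apply: NNPP => no_c; apply: no_t; exists s%:R => c Ic j.
  by apply: NNPP => /eqP cj; apply: no_c; exists c; split => //; exists j.
have [cc hcc] := fin_all_exists bad.
have [v nz_v vA] := exists_left_kernel (\matrix_(s, j) cc s j) (ltnSn p).
pose u s := \sum_j (v 0 s * cc s j) *: w j.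
have hu (s : 'I_p.+1) : I (lin_form i s%:R * u s).
  rewrite /u mulr_sumr; under eq_bigr do rewrite -scalerAr -scalerA.
  by rewrite -scaler_sumr; apply: (idealZ idealI); case: (hcc s).
have u_sum : \sum_s u s = 0.
  rewrite /u exchange_big /=; apply: big1 => j _; rewrite -scaler_suml.
  have <- : (v *m \matrix_(s, j) cc s j) 0 j = \sum_s v 0 s * cc s j.
    by rewrite mxE; apply: eq_bigr => s _; rewrite mxE.
  by rewrite vA mxE scale0r.
have s_inj : injective (fun s : 'I_p.+1 => (s : nat)%:R : F).
  by move=> a b /(pchar0_natr_inj F_pchar0) /val_inj.
have Isum : I (\sum_s u s) by rewrite u_sum; apply: (ideal0 idealI).
have Iu := ideal_parts_of_sum s_inj hu Isum.
apply/negP: nz_v; rewrite negbK; apply/eqP/rowP => s; rewrite [RHS]mxE.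
have [_ [j /negbTE cj]] := hcc s.
by have /eqP := free_w _ (Iu s) j; rewrite mulf_eq0 cj orbF => /eqP.
Qed.

Definition mdeg_incr D i : 'I_k -> nat := fun j => (D j + (j == i))%N.

Lemma mhomog_mul_lin_form D i t u :
  mhomog D u -> mhomog (mdeg_incr D i) (lin_form i t * u).
Proof.
have degU v : v = xv i \/ v = yv i -> mono_mdeg (fun j => nat_of_bool (j == i)) U_(v).
  move=> hv; apply/mono_mdegP => j; rewrite /mdeg_at !mnm1E.
  by case: hv => ->; rewrite ?eq_xv ?eq_xv_yv ?eq_yv_xv ?eq_yv ?addn0 eq_sym.
move=> hu; have hX v : v = xv i \/ v = yv i -> mhomog (mdeg_incr D i) ('X_v * u).
  by move=> /degU/mhomogXM/(_ hu); apply: mhomog_ext => j; rewrite addnC.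
rewrite /lin_form mulrDl -scalerAl.
by apply: mhomogD; [|apply: mhomogZ]; apply: hX; [left|right].
Qed.

Lemma free_mod_lift_step D i p (w : 'I_p -> S) :
  (forall j, mhomog D (w j)) -> free_mod I w ->
  exists2 w' : 'I_p -> S, forall j, mhomog (mdeg_incr D i) (w' j) & free_mod I w'.
Proof.
move=> hw /(free_mod_mul_lin_form i) [t free_tw].
by exists (fun j => lin_form i t * w j) => // j; apply: mhomog_mul_lin_form.
Qed.

Lemma free_mod_lift D D' p (w : 'I_p -> S) : (forall i, D i <= D' i)%N ->
  (forall j, mhomog D (w j)) -> free_mod I w ->
  exists2 w' : 'I_p -> S, forall j, mhomog D' (w' j) & free_mod I w'.
Proof.
move=> le_DD'; have [K ltK] := ubnP (\sum_i (D' i - D i))%N.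
elim: K D w le_DD' ltK => // K IHK D w le_DD' ltK hw free_w.
have [/existsP [i lt_i]|] := boolP [exists i, D i < D' i]%N; last first.
  rewrite negb_exists => /forallP eqD; exists w => // j.
  by apply: mhomog_ext (hw j) => i; apply/eqP; rewrite eqn_leq le_DD' leqNgt eqD.
have [w1 hw1 free_w1] := free_mod_lift_step i hw free_w.
apply: (IHK (mdeg_incr D i) w1 _ _ hw1 free_w1) => [j|].
  by rewrite /mdeg_incr; case: eqP => [->|_]; rewrite ?addn1 ?addn0.
rewrite -ltnS; apply: leq_ltn_trans ltK; rewrite (bigD1 i) //= [leqRHS](bigD1 i) //=.
rewrite /mdeg_incr eqxx addn1 -addSn subnSK // leq_add2l leq_eqVlt; apply/orP; left.
by apply/eqP/eq_bigr => j /negbTE ->; rewrite addn0.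
Qed.

Lemma free_mod_card_le_degree n D q (w : 'I_q -> S) : has_degree I n ->
  (forall j, mhomog D (w j)) -> free_mod I w -> (q <= n)%N.
Proof.
move=> [N degN] w_deg free_w.
have [w' w'_deg free_w'] := free_mod_lift (D' := fun i => maxn (D i) N)
  (fun i => leq_maxl _ _) w_deg free_w.
have [b [_ _ b_span]] := degN _ (fun i => leq_maxr (D i) N).
exact: (free_mod_card_le idealI free_w' (fun l => b_span _ (w'_deg l))).
Qed.

End Lifting.

Section StandardMonomials.
Variables (F : fieldType) (k : nat).
Local Notation S := {mpoly F[k + k]}.
Local Notation mnm := 'X_{1..k + k}.
Local Notation Zk := (@Zk_ideal F k).
Implicit Types (D : 'I_k -> nat) (g : S) (m : mnm) (J : {ffun 'I_k -> bool}).

Definition std_mnm m : bool := [forall i, m (yv i) <= 1]%N.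

Definition nstd : nat := #|{: {ffun 'I_k -> bool}}|.

Lemma nstdE : nstd = (2 ^ k)%N.
Proof. by rewrite /nstd card_ffun card_bool card_ord. Qed.

Definition std_mono D J : mnm := mnm_xy (fun i => D i - J i)%N (fun i => nat_of_bool (J i)).

Definition std_basis D (j : 'I_nstd) : S := 'X_[std_mono D (enum_val j)].

Lemma std_mono_inj D : injective (std_mono D).
Proof.
move=> J J' /(congr1 (fun m : mnm => m (yv _))) eqJ; apply/ffunP => i.
by have := eqJ i; rewrite !mnm_xy_yv; case: (J i); case: (J' i).
Qed.

Lemma std_mnm_std_mono D J : std_mnm (std_mono D J).
Proof. by apply/forallP => i; rewrite mnm_xy_yv; case: (J i). Qed.

Lemma mono_mdeg_std_mono D J : (forall i, 0 < D i)%N -> mono_mdeg D (std_mono D J).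
Proof.
move=> D_gt0; apply/mono_mdegP => i; rewrite /mdeg_at mnm_xy_xv mnm_xy_yv subnK //.
by case: (J i).
Qed.

Lemma std_monoP D m : std_mnm m -> mono_mdeg D m ->
  exists j : 'I_nstd, m = std_mono D (enum_val j).
Proof.
move=> /forallP m_std /mono_mdegP m_deg.
exists (enum_rank [ffun i => m (yv i) == 1%N]); rewrite enum_rankK.
apply: mnmP_xy => i; rewrite ?mnm_xy_xv ?mnm_xy_yv ffunE -?(m_deg i) /mdeg_at;
  by have := m_std i; case: (m (yv i)) => [|[|]] //= _; rewrite ?subn0 ?addn0 ?addnK.
Qed.

Lemma mhomog_std_basis D j : (forall i, 0 < D i)%N -> mhomog D (std_basis D j).
Proof. by move=> D_gt0; apply/mhomogX/mono_mdeg_std_mono. Qed.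

Lemma mcoeff_std_basis_sum D (c : 'I_nstd -> F) m :
  (\sum_j c j *: std_basis D j)@_m =
  if [pick j | std_mono D (enum_val j) == m] is Some j then c j else 0.
Proof.
rewrite raddf_sum /=; under eq_bigr do rewrite mcoeffZ mcoeffX.
case: pickP => [j /eqP <- | no_j]; last first.
  by rewrite big1 // => j _; rewrite no_j mulr0.
rewrite (bigD1 j) //= eqxx mulr1 big1 ?addr0 // => j' ne_j'.
by case: eqP => [/std_mono_inj /enum_val_inj eq_j'|]; [rewrite eq_j' eqxx in ne_j'|rewrite mulr0].
Qed.

Lemma mcoeff_std_basis_sum_std D (c : 'I_nstd -> F) j :
  (\sum_j' c j' *: std_basis D j')@_(std_mono D (enum_val j)) = c j.
Proof.
rewrite mcoeff_std_basis_sum; case: pickP => [j' /eqP /std_mono_inj /enum_val_inj -> //|].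
by move/(_ j); rewrite eqxx.
Qed.

Lemma mpoly_std_expand D g : mhomog D g -> {in msupp g, forall m, std_mnm m} ->
  g = \sum_j g@_(std_mono D (enum_val j)) *: std_basis D j.
Proof.
move=> g_deg g_std; apply/mpolyP => m; rewrite mcoeff_std_basis_sum.
case: pickP => [j /eqP -> //|no_j]; apply/eqP; rewrite mcoeff_eq0; apply/negP => m_g.
have [j m_j] := std_monoP (g_std _ m_g) (g_deg _ m_g).
by have := no_j j; rewrite m_j eqxx.
Qed.

End StandardMonomials.

Arguments std_mnm {k} m.
Arguments std_basis {F k} D j.

Section ZkIdeal.
Variables (F : fieldType) (k : nat).
Local Notation S := {mpoly F[k + k]}.
Local Notation mnm := 'X_{1..k + k}.
Local Notation Zk := (@Zk_ideal F k).
Implicit Types (D : 'I_k -> nat) (f g : S) (m : mnm).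

Definition std_part f : S := \sum_(m <- msupp f | std_mnm m) f@_m *: 'X_[m].

Lemma mcoeff_std_part f m : (std_part f)@_m = if std_mnm m then f@_m else 0.
Proof.
rewrite mcoeff_sumX ?msupp_uniq //.
by case: (boolP (m \in msupp f)) => [//|/memN_msupp_eq0 ->]; case: ifP.
Qed.

Lemma std_part_std f : {in msupp (std_part f), forall m, std_mnm m}.
Proof. by move=> m; rewrite mcoeff_msupp mcoeff_std_part; case: ifP; rewrite ?eqxx. Qed.

Lemma mhomog_std_part D f : mhomog D f -> mhomog D (std_part f).
Proof.
move=> f_deg m; rewrite mcoeff_msupp mcoeff_std_part.
by case: ifP => _; rewrite ?eqxx // -mcoeff_msupp; apply: f_deg.
Qed.

Lemma Zk_is_ideal : is_ideal Zk.
Proof.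
split.
- by exists (fun=> 0); rewrite big1 // => i _; rewrite mul0r.
- move=> _ _ [a ->] [b ->]; exists (fun i => a i + b i).
  by rewrite -big_split; apply: eq_bigr => i _; rewrite mulrDl.
- move=> f _ [a ->]; exists (fun i => f * a i).
  by rewrite mulr_sumr; apply: eq_bigr => i _; rewrite mulrA.
Qed.

Lemma Zk_scaleX c m : ~~ std_mnm m -> Zk (c *: 'X_[m]).
Proof.
rewrite negb_forall; case/existsP => i; rewrite -ltnNge => y2_lt.
have le_m : (U_(yv i) *+ 2 <= m)%MM.
  by apply/mnm_lepP => v; rewrite mulmnE mnm1E; case: eqP => [<-|].
exists (fun i' => if i' == i then c *: 'X_[m - U_(yv i) *+ 2] else 0).
rewrite (bigD1 i) //= eqxx big1 ?addr0 => [|j /negbTE ->]; last by rewrite mul0r.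
by rewrite -scalerAl mpolyXn -mpolyXD submK.
Qed.

Lemma ZkP f : Zk f <-> {in msupp f, forall m, ~~ std_mnm m}.
Proof.
split=> [[g ->] m /msupp_sum_le /flatten_mapP [i _]|f_nstd].
  rewrite mpolyXn (perm_mem (msuppMX _ _)) => /mapP [m' _ ->].
  apply/negP => /forallP /(_ i); rewrite mnmDE mulmnE mnm1E eqxx.
  by case: (m' (yv i)).
rewrite (mpolyE f) big_seq; apply: (ideal_sum Zk_is_ideal) => m /f_nstd.
exact: Zk_scaleX.
Qed.

Lemma Zk_sub_std_part f : Zk (f - std_part f).
Proof.
rewrite {1}(mpolyE f) (bigID std_mnm) /= addrC addrK.
by apply: (ideal_sum Zk_is_ideal) => m; apply: Zk_scaleX.
Qed.

Lemma Zk_lincomb D f : mhomog D f -> lincomb_mod Zk (std_basis D) f.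
Proof.
move=> f_deg; exists (fun j => (std_part f)@_(std_mono D (enum_val j))).
by rewrite -(mpoly_std_expand (mhomog_std_part f_deg) (@std_part_std f)); apply: Zk_sub_std_part.
Qed.

Lemma free_mod_Zk_std_basis D : free_mod Zk (std_basis D).
Proof.
move=> c /ZkP c_nstd j; apply/eqP; rewrite -(mcoeff_std_basis_sum_std D c j).
by rewrite mcoeff_eq0; apply/negP => /c_nstd; rewrite std_mnm_std_mono.
Qed.

Lemma Zk_hilb_eq D : (forall i, 0 < D i)%N -> hilb_eq Zk D (nstd k).
Proof.
move=> D_gt0; exists (std_basis D); split.
- by move=> j; apply: mhomog_std_basis.
- exact: free_mod_Zk_std_basis.
- exact: Zk_lincomb.
Qed.

Lemma Zk_has_degree : has_degree Zk (nstd k).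
Proof. by exists 1%N => D; apply: Zk_hilb_eq. Qed.

Lemma Zk_mhomog : is_mhomog_ideal Zk.
Proof.
split=> [|f D /ZkP f_nstd]; first exact: Zk_is_ideal.
apply/ZkP => m; rewrite mcoeff_msupp mcompE.
by case: ifP => _; rewrite ?eqxx // -mcoeff_msupp; apply: f_nstd.
Qed.

Definition x_mono N : mnm := mnm_xy (fun=> N) (fun=> 0%N).

Lemma mono_mdeg_x_mono N : mono_mdeg (fun=> N) (x_mono N).
Proof. by apply/mono_mdegP => i; rewrite /mdeg_at mnm_xy_xv mnm_xy_yv addn0. Qed.

Lemma std_mnm_addx N m : std_mnm (x_mono N + m)%MM = std_mnm m.
Proof. by apply: eq_forallb => i; rewrite mnmDE mnm_xy_yv. Qed.

Lemma Zk_saturated : B_saturated Zk.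
Proof.
move=> f [N /(_ _ (mono_mdeg_x_mono N)) /ZkP Xf_nstd]; apply/ZkP => m m_f.
rewrite -(std_mnm_addx N); apply: Xf_nstd.
by rewrite mcoeff_msupp mcoeffXM -mcoeff_msupp.
Qed.

Lemma Zk_zero_dim : zero_dim_scheme Zk.
Proof. by split; [exact: Zk_mhomog|exact: Zk_saturated|exists (nstd k); exact: Zk_has_degree]. Qed.

End ZkIdeal.

Lemma apolarXr (F : fieldType) (k : nat) (G : {mpoly F[k + k]}) (m : 'X_{1..k + k}) :
  apolar G 'X_[m] = G@_m * \prod_(v < k + k) ((m v)`!)%:R.
Proof.
rewrite /apolar; have [m_G|m_nG] := boolP (m \in msupp G); last first.
  rewrite (memN_msupp_eq0 m_nG) mul0r big1_seq // => m' /andP [_ m'_G].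
  rewrite mcoeffX; case: eqP => [eq_m|_]; last by rewrite mulr0 mul0r.
  by rewrite eq_m m'_G in m_nG.
rewrite (bigD1_seq m) ?msupp_uniq //= mcoeffX eqxx mulr1 [X in _ + X]big1 ?addr0 // => m' /negbTE ne_m.
by rewrite mcoeffX eq_sym ne_m mulr0 mul0r.
Qed.

Section Wtensor.
Variables (F : fieldType) (k : nat) (d : 'I_k -> nat).
Local Notation S := {mpoly F[k + k]}.
Local Notation T := (Wtensor F d).
Local Notation Zk := (@Zk_ideal F k).

Definition W_mono : 'X_{1..k + k} := mnm_xy (fun i => (d i).-1) (fun=> 1%N).

Lemma WtensorE : T = 'X_[W_mono].
Proof.
rewrite mpolyXE_id big_split_ord /Wtensor big_split /=.
congr (_ * _); apply: eq_bigr => i _.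
  by rewrite -[lshift k i]/(xv i) mnm_xy_xv.
by rewrite -[rshift k i]/(yv i) mnm_xy_yv expr1.
Qed.

Lemma Zk_in_span : in_span d Zk T.
Proof.
rewrite WtensorE; split=> [|G /ZkP G_nstd _].
  apply/eqP => /(congr1 (mcoeff W_mono)).
  by rewrite mcoeffX eqxx mcoeff0 => /eqP; rewrite oner_eq0.
rewrite apolarXr; have [/G_nstd|/memN_msupp_eq0 ->] := boolP (W_mono \in msupp G).
  by apply: contraNeq => _; apply/forallP => i; rewrite mnm_xy_yv.
by rewrite mul0r.
Qed.

Section InSpan.
Hypothesis F_pchar0 : [pchar F] =i pred0.
Hypothesis d_gt0 : forall i, (0 < d i)%N.
Variable I : S -> Prop.
Hypotheses (idealI : is_ideal I) (spanT : in_span d I T).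

(* X^(W - m) g is a form of I of multidegree d, and its pairing with T = X^W is
   a nonzero multiple of g@_m. *)
Lemma in_span_mcoeff0 E g m : I g -> mhomog E g ->
  (m <= W_mono)%MM -> mono_mdeg E m -> g@_m = 0.
Proof.
move=> Ig g_deg le_mW m_deg.
have W_deg : mono_mdeg d W_mono.
  by apply/mono_mdegP => i; rewrite /mdeg_at mnm_xy_xv mnm_xy_yv addn1 prednK.
have le_Ed i : (E i <= d i)%N.
  move/mono_mdegP: W_deg => /(_ i) <-; move/mono_mdegP: m_deg => /(_ i) <-.
  by move/mnm_lepP: le_mW => le_mW; apply: leq_add.
have Xg_deg : mhomog d ('X_[W_mono - m] * g).
  apply: mhomog_ext (mhomogXM (mono_mdegB le_mW W_deg m_deg) g_deg) => i.
  exact: subnK.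
have := spanT.2 _ (idealMl idealI _ Ig) Xg_deg.
rewrite WtensorE apolarXr -{1}(submK le_mW) mcoeffXM.
move=> /eqP; rewrite mulf_eq0 => /orP [/eqP //|]; apply: contraTeq => _.
by apply/prodf_neq0 => v _; rewrite (pcharf0P _).1 // -lt0n fact_gt0.
Qed.

Lemma in_span_std_mcoeff0 E g J : I g -> mhomog E g -> (forall i, 0 < E i < d i)%N ->
  g@_(std_mono E J) = 0.
Proof.
move=> Ig g_deg E_d; apply: in_span_mcoeff0 Ig g_deg _ _; last first.
  by apply: mono_mdeg_std_mono => i; case/andP: (E_d i).
apply/mnm_lepP => v; case: (xv_or_yv v) => -[i ->];
  rewrite ?mnm_xy_xv ?mnm_xy_yv; last by case: (J i).
by have := E_d i; lia.
Qed.

Lemma free_mod_std_basis E : (forall i, 0 < E i < d i)%N -> free_mod I (std_basis E).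
Proof.
move=> E_d c Ic j; rewrite -(mcoeff_std_basis_sum_std E c j).
apply: (in_span_std_mcoeff0 _ Ic _ E_d); apply: mhomog_sum => j' _.
by apply/mhomogZ/mhomogX/mono_mdeg_std_mono => i; case/andP: (E_d i).
Qed.

End InSpan.

End Wtensor.

Section CactusRank.
Variables (F : fieldType) (k : nat) (d : 'I_k -> nat).
Hypothesis F_pchar0 : [pchar F] =i pred0.
Local Notation S := {mpoly F[k + k]}.
Local Notation T := (Wtensor F d).
Local Notation Zk := (@Zk_ideal F k).

Lemma in_span_degree_ge (d_gt1 : forall i, (1 < d i)%N) I n :
  zero_dim_scheme I -> has_degree I n -> in_span d I T -> (nstd k <= n)%N.
Proof.
move=> [[idealI _] satI _] degI spanT.
have d_gt0 i : (0 < d i)%N by apply: ltnW.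
apply: (free_mod_card_le_degree idealI satI F_pchar0 (w := std_basis (fun=> 1%N)) degI).
  by move=> j; apply/mhomogX/mono_mdeg_std_mono.
by apply: (free_mod_std_basis F_pchar0 d_gt0 idealI spanT) => i; rewrite d_gt1.
Qed.

Section Uniqueness.
Hypothesis d_gt2 : forall i, (2 < d i)%N.
Variable I : S -> Prop.
Hypotheses (zdI : zero_dim_scheme I) (degI : has_degree I (nstd k)).
Hypothesis spanT : in_span d I T.

Let idealI : is_ideal I. Proof. by case: zdI => -[]. Qed.
Let satI : B_saturated I. Proof. by case: zdI. Qed.
Let d_gt0 i : (0 < d i)%N. Proof. exact: ltnW (ltnW (d_gt2 i)). Qed.

(* Otherwise X^m Y_i^2 and the standard monomials of multidegree
   E = (1,..,2,..,1), which all divide W as d >= 3, would be nstd + 1 forms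
   independent modulo I. *)
Lemma mulY2_in_ideal i m : mono_mdeg (fun j => 1 - (j == i))%N m ->
  I 'X_[m + U_(yv i) *+ 2].
Proof.
move=> /mono_mdegP m_deg; apply: NNPP => notI; set mg := (m + _)%MM in notI.
pose E j := if j == i then 2%N else 1%N.
have E_d j : (0 < E j < d j)%N by have := d_gt2 j; rewrite /E; case: (j == i); lia.
have mg_deg : mono_mdeg E mg.
  apply/mono_mdegP => j; have := m_deg j.
  rewrite /mdeg_at !mnmDE !mnm1E eq_yv_xv eq_yv /E [i == j]eq_sym.
  by case: (j == i) => /=; lia.
have mg_nstd J : (mg == std_mono E J) = false.
  apply/eqP => /(congr1 (fun m' : 'X_{1..k + k} => m' (yv i))).
  by rewrite mnm_xy_yv !mnmDE !mnm1E eqxx; case: (J i); lia.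
have free_cons : forall c0 c, I (c0 *: 'X_[mg] + \sum_j c j *: std_basis E j) ->
    forall j, c j = 0.
  move=> c0 c Ic j.
  have comb_deg : mhomog E (c0 *: 'X_[mg] + \sum_j c j *: std_basis E j).
    apply: mhomogD; first exact/mhomogZ/mhomogX.
    by apply: mhomog_sum => j' _; apply/mhomogZ/mhomog_std_basis => i'; case/andP: (E_d i').
  have := in_span_std_mcoeff0 F_pchar0 d_gt0 idealI spanT (enum_val j) Ic comb_deg E_d.
  by rewrite mcoeffD mcoeffZ mcoeffX mg_nstd mulr0 add0r mcoeff_std_basis_sum_std.
have w_deg j : mhomog E (if unlift ord0 j is Some j' then std_basis E j' else 'X_[mg] : S).
  case: (unlift ord0 j) => [j'|]; last exact: mhomogX.
  by apply: mhomog_std_basis => i'; case/andP: (E_d i').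
have := free_mod_card_le_degree idealI satI F_pchar0 degI w_deg (free_mod_cons idealI notI free_cons).
by rewrite ltnn.
Qed.

Lemma Y2_in_ideal i : I ('X_(yv i) ^+ 2).
Proof.
apply: satI; exists 1%N => m m_deg.
have [v v_i m_v] : exists2 v, v = xv i \/ v = yv i & (0 < m v)%N.
  move/mono_mdegP: m_deg => /(_ i); rewrite /mdeg_at.
  have [x0|x_gt0 _] := posnP (m (xv i)); last by exists (xv i); [left|].
  by rewrite x0 => y1; exists (yv i); [right|lia].
rewrite (mpolyX_subU m_v) mulrAC mulrC mpolyXn -mpolyXD; apply: (idealMl idealI).
exact/mulY2_in_ideal/(mono_mdeg_subU v_i m_v m_deg).
Qed.

Lemma Zk_sub_ideal f : Zk f -> I f.
Proof.
move=> [g ->]; apply: (ideal_sum idealI) => i _.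
exact/(idealMl idealI)/Y2_in_ideal.
Qed.

Lemma free_mod_std_basis_large :
  exists N, forall D, (forall i, N <= D i)%N -> free_mod I (std_basis D).
Proof.
have [N degN] := degI; exists N => D le_ND.
have [b [b_deg free_b _]] := degN D le_ND.
apply: (free_mod_transfer idealI free_b) => l.
by have [c Zc] := Zk_lincomb (b_deg l); exists c; apply: Zk_sub_ideal.
Qed.

(* Multiplying by x^N moves g to a multidegree where the standard monomials
   are independent modulo I. *)
Lemma std_form_in_ideal_eq0 D g :
  mhomog D g -> {in msupp g, forall m, std_mnm m} -> I g -> g = 0.
Proof.
move=> g_deg g_std Ig; have [N free_N] := free_mod_std_basis_large.
pose a := x_mono k N; pose D' i := (N + D i)%N.
have Xg_deg : mhomog D' ('X_[a] * g) := mhomogXM (mono_mdeg_x_mono _ N) g_deg.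
have Xg_std : {in msupp ('X_[a] * g), forall m, std_mnm m}.
  by move=> m /msuppXM [m' /g_std m'_std ->]; rewrite std_mnm_addx.
have := idealMl idealI 'X_[a] Ig; rewrite (mpoly_std_expand Xg_deg Xg_std).
move=> /(free_N D' (fun i => leq_addr _ _)) Xg_coef0.
apply/mpolyP => m; rewrite mcoeff0; have [m_g|/memN_msupp_eq0 //] := boolP (m \in msupp g).
have am_Xg : (a + m)%MM \in msupp ('X_[a] * g) by rewrite mcoeff_msupp mcoeffXM -mcoeff_msupp.
have [j am_j] := std_monoP (Xg_std _ am_Xg) (Xg_deg _ am_Xg).
by have := Xg_coef0 j; rewrite -am_j mcoeffXM.
Qed.

Lemma ideal_sub_Zk f : I f -> Zk f.
Proof.
move=> If; suff r0 : std_part f = 0 by have := Zk_sub_std_part f; rewrite r0 subr0.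
have Ir : I (std_part f).
  by rewrite -[std_part f](subKr f); apply: (idealB idealI If); apply/Zk_sub_ideal/Zk_sub_std_part.
apply/mpolyP => m; have m_deg : mono_mdeg (mdeg_at m) m by apply/mono_mdegP.
have := mcompE (mdeg_at m) (std_part f) m; rewrite m_deg => <-.
suff -> : mcomp (mdeg_at m) (std_part f) = 0 by rewrite mcoeff0.
apply: (@std_form_in_ideal_eq0 (mdeg_at m)); first exact: mhomog_mcomp.
  by move=> m' /msupp_mcomp /andP [_ /std_part_std].
by case: zdI => -[_ mhomogI] _ _; apply: mhomogI.
Qed.

End Uniqueness.

End CactusRank.

Unset Implicit Arguments. Set Strict Implicit. Set Printing Implicit Defensive.

Theorem theorem5p1 (R : realType) (k : nat) (d : 'I_k -> nat) :
  (1 <= k)%N -> (forall i, (3 <= d i)%N) ->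
  zero_dim_scheme (@Zk_ideal R[i] k) /\
  exists r : nat,
    [/\ is_cactus_rank d (Wtensor R[i] d) r,
        has_degree (@Zk_ideal R[i] k) r,
        in_span d (@Zk_ideal R[i] k) (Wtensor R[i] d) &
        forall I : {mpoly R[i][k + k]} -> Prop,
          zero_dim_scheme I -> has_degree I r -> in_span d I (Wtensor R[i] d) ->
          forall f, I f <-> Zk_ideal f].
Proof.
move=> _ d_gt2; have C_pchar0 := @pchar_num R[i].
have d_gt1 i : (1 < d i)%N by apply: ltnW.
split; first exact: Zk_zero_dim.
exists (2 ^ k)%N; rewrite -nstdE; split; [split| exact: Zk_has_degree | exact: Zk_in_span |].
- by exists (@Zk_ideal R[i] k); split; [exact: Zk_zero_dim|exact: Zk_has_degree|exact: Zk_in_span].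
- by move=> I n; apply: in_span_degree_ge.
- move=> I zdI degI spanT f; split; first exact: ideal_sub_Zk.
  exact: Zk_sub_ideal.
Qed.
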